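(* There is an absolute constant $c>0$ such that for all $k\ge 2$, $\gamma\in(0,1/4]$ and $\varepsilon\in(0,1]$ the following holds: if each of $n$ users reports its sample via $\varepsilon$-RAPPOR and the curator applies any (possibly randomized) decision rule to the $n$ reports (so that the whole procedure is a uniformity tester over $[k]$ with distance parameter $\gamma$), then $n\ge c\,k^{3/2}/(\gamma^2\varepsilon^2)$.
   Context: $\Delta([k])$ is the set of probability distributions on $[k]=\{1,\dots,k\}$, $u$ the uniform distribution on $[k]$, $d_{TV}(p,q)=\frac12\|p-q\|_1$. Users hold i.i.d. samples $X_1,\dots,X_n$ from an unknown $p\in\Delta([k])$. The $\varepsilon$-RAPPOR mechanism maps $x\in[k]$ to a random vector $b\in\{0,1\}^k$ obtained from the one-hot vector $e_x$ by flipping each coordinate independently with probability $1/(e^{\varepsilon/2}+1)$, independently across users. A uniformity tester with distance parameter $\gamma$ must, for every $p$, output ``uniform'' with probability at least $2/3$ if $p=u$ and ``not uniform'' with probability at least $2/3$ if $d_{TV}(p,u)>\gamma$. *)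

From Stdlib Require Import Reals List.
Import ListNotations.
Open Scope R_scope.

(* Domain [k] is encoded as {0,...,k-1}. A report b in {0,1}^k is a
   list bool of length k; a transcript is the list of the n reports. *)

Definition Rsum (l : list R) : R := fold_right Rplus 0 l.
Definition Rprod (l : list R) : R := fold_right Rmult 1 l.

Definition sum_range (k : nat) (f : nat -> R) : R := Rsum (map f (seq 0 k)).

Fixpoint bvecs (k : nat) : list (list bool) :=
  match k with
  | O => [nil]
  | S k' => flat_map (fun v => [true :: v; false :: v]) (bvecs k')
  end.

Fixpoint transcripts (n k : nat) : list (list (list bool)) :=
  match n with
  | O => [nil]
  | S n' => flat_map (fun t => map (fun b => b :: t) (bvecs k)) (transcripts n' k)
  end.

Definition flip_prob (eps : R) : R := / (exp (eps / 2) + 1).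

(* P[RAPPOR(x) = b]: each coordinate of the one-hot vector e_x is flipped
   independently with probability flip_prob eps. *)
Definition rappor_prob (eps : R) (k x : nat) (b : list bool) : R :=
  Rprod (map (fun j => if Bool.eqb (nth j b false) (Nat.eqb x j)
                       then 1 - flip_prob eps else flip_prob eps) (seq 0 k)).

Definition report_prob (eps : R) (k : nat) (p : nat -> R) (b : list bool) : R :=
  sum_range k (fun x => p x * rappor_prob eps k x b).

Definition transcript_prob (eps : R) (k : nat) (p : nat -> R)
  (t : list (list bool)) : R :=
  Rprod (map (report_prob eps k p) t).

(* A (possibly randomized) decision rule D outputs "uniform" on transcript t
   with probability D t in [0,1]. *)
Definition valid_rule (D : list (list bool) -> R) : Prop :=
  forall t, 0 <= D t <= 1.

Definition accept_prob (eps : R) (k n : nat) (p : nat -> R)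
  (D : list (list bool) -> R) : R :=
  Rsum (map (fun t => transcript_prob eps k p t * D t) (transcripts n k)).

Definition is_dist (k : nat) (p : nat -> R) : Prop :=
  (forall i, (i < k)%nat -> 0 <= p i) /\ sum_range k p = 1.

Definition is_uniform (k : nat) (p : nat -> R) : Prop :=
  forall i, (i < k)%nat -> p i = / INR k.

Definition dTV_unif (k : nat) (p : nat -> R) : R :=
  / 2 * sum_range k (fun i => Rabs (p i - / INR k)).

Definition is_uniformity_tester (eps : R) (k n : nat) (gamma : R)
  (D : list (list bool) -> R) : Prop :=
  forall p, is_dist k p ->
    (is_uniform k p -> accept_prob eps k n p D >= 2 / 3) /\
    (dTV_unif k p > gamma -> 1 - accept_prob eps k n p D >= 2 / 3).

(* Le Cam's method against a mixture of Paninski-type hard instances.  Pair the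
   symbols [2i] and [2i+1] for [i < m = k/2]; for each sign vector [z] move mass
   [eta = 4 gamma / k] within every pair, in the direction [z_i].  Each such
   distribution is gamma-far from uniform, so a tester separates the uniform
   transcript law from the average of the perturbed ones, which forces their
   chi-square divergence to be at least 1/9.  Swapping the two RAPPOR bits of a pair
   negates that pair's likelihood difference, so the cross terms vanish and the
   divergence equals the average over [z, z'] of [(1 + eta^2 sum_i z_i z'_i chi_i)^n]
   with [chi_i = O(eps^2)].  Bounding this by a product of [cosh (n eta^2 chi_i)]
   gives at most [1 / (1 - m (n eta^2 5 eps^2)^2)], which is below 10/9 unless
   [n >= c k^(3/2) / (gamma^2 eps^2)]. *)

From Stdlib Require Import Reals List Permutation Lia Lra.
Import ListNotations.
Open Scope R_scope.

Lemma Rsum_app l1 l2 : Rsum (l1 ++ l2) = Rsum l1 + Rsum l2.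
Proof. induction l1; simpl; [lra | rewrite IHl1; lra]. Qed.

Lemma Rsum_ext {A} (f g : A -> R) l :
  (forall x, In x l -> f x = g x) -> Rsum (map f l) = Rsum (map g l).
Proof. intros H; f_equal; apply map_ext_in; auto. Qed.

Lemma Rprod_ext {A} (f g : A -> R) l :
  (forall x, In x l -> f x = g x) -> Rprod (map f l) = Rprod (map g l).
Proof. intros H; f_equal; apply map_ext_in; auto. Qed.

Lemma Rsum_plus {A} (f g : A -> R) l :
  Rsum (map (fun x => f x + g x) l) = Rsum (map f l) + Rsum (map g l).
Proof. induction l; simpl; [lra | rewrite IHl; lra]. Qed.

Lemma Rsum_minus {A} (f g : A -> R) l :
  Rsum (map (fun x => f x - g x) l) = Rsum (map f l) - Rsum (map g l).
Proof. induction l; simpl; [lra | rewrite IHl; lra]. Qed.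

Lemma Rsum_scal {A} c (f : A -> R) l :
  Rsum (map (fun x => c * f x) l) = c * Rsum (map f l).
Proof. induction l; simpl; [lra | rewrite IHl; lra]. Qed.

Lemma Rsum_scal_r {A} c (f : A -> R) l :
  Rsum (map (fun x => f x * c) l) = Rsum (map f l) * c.
Proof. induction l; simpl; [lra | rewrite IHl; lra]. Qed.

Lemma Rsum_const {A} c (l : list A) : Rsum (map (fun _ => c) l) = INR (length l) * c.
Proof. induction l; simpl length; [simpl; lra|]. rewrite S_INR; simpl; rewrite IHl; lra. Qed.

Lemma Rsum_le {A} (f g : A -> R) l :
  (forall x, In x l -> f x <= g x) -> Rsum (map f l) <= Rsum (map g l).
Proof.
  induction l; simpl; intros H; [lra|].
  assert (f a <= g a) by auto. assert (Rsum (map f l) <= Rsum (map g l)) by auto. lra.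
Qed.

Lemma Rsum_nonneg {A} (f : A -> R) l :
  (forall x, In x l -> 0 <= f x) -> 0 <= Rsum (map f l).
Proof.
  intros H. rewrite <- (Rmult_0_r (INR (length l))), <- Rsum_const. now apply Rsum_le.
Qed.

Lemma Rsum_zero {A} (f : A -> R) l : (forall x, In x l -> f x = 0) -> Rsum (map f l) = 0.
Proof. intros H. rewrite (Rsum_ext _ (fun _ => 0)), Rsum_const by auto. ring. Qed.

Lemma Rsum_single (F : nat -> R) l i : NoDup l -> In i l ->
  (forall j, In j l -> j <> i -> F j = 0) -> Rsum (map F l) = F i.
Proof.
  intros Hnd. induction Hnd; simpl; [tauto|]. intros [<-|Hin] H0.
  - rewrite Rsum_zero; [ring|]. intros j Hj. apply H0; auto. intros ->; auto.
  - rewrite IHHnd, H0; auto; [ring|]. intros ->; auto.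
Qed.

Lemma Rsum_swap {A B} (F : A -> B -> R) l1 l2 :
  Rsum (map (fun x => Rsum (map (fun y => F x y) l2)) l1) =
  Rsum (map (fun y => Rsum (map (fun x => F x y) l1)) l2).
Proof.
  induction l1; simpl.
  - rewrite Rsum_zero; auto.
  - rewrite IHl1, <- Rsum_plus. reflexivity.
Qed.

Lemma Rsum_mult {A B} (f : A -> R) (g : B -> R) l1 l2 :
  Rsum (map f l1) * Rsum (map g l2) =
  Rsum (map (fun x => Rsum (map (fun y => f x * g y) l2)) l1).
Proof. induction l1; simpl; [lra|]. rewrite <- IHl1, Rsum_scal. lra. Qed.

Lemma Rsum_flat_map {A B} (g : A -> list B) (F : B -> R) l :
  Rsum (map F (flat_map g l)) = Rsum (map (fun x => Rsum (map F (g x))) l).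
Proof. induction l; simpl; auto. rewrite map_app, Rsum_app, IHl. auto. Qed.

Lemma Rsum_perm l1 l2 : Permutation l1 l2 -> Rsum l1 = Rsum l2.
Proof. unfold Rsum; induction 1; simpl; lra. Qed.

Lemma Rprod_perm l1 l2 : Permutation l1 l2 -> Rprod l1 = Rprod l2.
Proof. unfold Rprod; induction 1; simpl; [ring | rewrite IHPermutation; ring | ring | congruence]. Qed.

Lemma Rprod_mult {A} (f g : A -> R) l :
  Rprod (map (fun x => f x * g x) l) = Rprod (map f l) * Rprod (map g l).
Proof. induction l; simpl; [lra | rewrite IHl; lra]. Qed.

Lemma Rprod_inv {A} (h : A -> R) l : (forall x, In x l -> h x <> 0) ->
  Rprod (map (fun x => / h x) l) = / Rprod (map h l).
Proof.
  induction l; simpl; intros H; [now rewrite Rinv_1|].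
  rewrite IHl, Rinv_mult; auto.
Qed.

Lemma Rprod_nonneg {A} (f : A -> R) l :
  (forall x, In x l -> 0 <= f x) -> 0 <= Rprod (map f l).
Proof. induction l; simpl; intros H; [lra|]. apply Rmult_le_pos; auto. Qed.

Lemma Rprod_pos {A} (f : A -> R) l :
  (forall x, In x l -> 0 < f x) -> 0 < Rprod (map f l).
Proof. induction l; simpl; intros H; [lra|]. apply Rmult_lt_0_compat; auto. Qed.

Lemma Rprod_le {A} (f g : A -> R) l :
  (forall x, In x l -> 0 <= f x <= g x) -> Rprod (map f l) <= Rprod (map g l).
Proof.
  induction l; simpl; intros H; [lra|].
  apply Rmult_le_compat; try apply H; auto.
  apply Rprod_nonneg; intros; apply H; auto.
Qed.

Lemma Rprod_one {A} (F : A -> R) l : (forall x, In x l -> F x = 1) -> Rprod (map F l) = 1.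
Proof. induction l; simpl; intros H; auto. rewrite H, IHl; auto; lra. Qed.

Lemma Rprod_const_seq c s m : Rprod (map (fun _ => c) (seq s m)) = c ^ m.
Proof. revert s; induction m; intros; simpl; auto. rewrite IHm; auto. Qed.

Lemma Rprod_point (F G : nat -> R) l x : NoDup l -> In x l ->
  (forall j, In j l -> j <> x -> F j = G j) ->
  Rprod (map F l) * G x = Rprod (map G l) * F x.
Proof.
  intros Hnd. induction Hnd; simpl; [tauto|]. intros Hin Hfg.
  destruct Hin as [<-|Hin].
  - rewrite (Rprod_ext F G l); [ring|]. intros j Hj; apply Hfg; auto. intros ->; auto.
  - rewrite (Hfg x0) by (auto; intros ->; auto).
    rewrite Rmult_assoc, (IHHnd Hin (fun j Hj => Hfg j (or_intror Hj))). ring.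
Qed.

Lemma exp_Rsum {A} (f : A -> R) l :
  exp (Rsum (map f l)) = Rprod (map (fun x => exp (f x)) l).
Proof. induction l; simpl; [apply exp_0|]. rewrite exp_plus, IHl; auto. Qed.

Lemma exp_pow x n : exp x ^ n = exp (INR n * x).
Proof.
  induction n; simpl; [now rewrite Rmult_0_l, exp_0|].
  rewrite IHn, <- exp_plus. f_equal. destruct n; simpl; ring.
Qed.

Lemma sum_range_S n F : sum_range (S n) F = sum_range n F + F n.
Proof. unfold sum_range. rewrite seq_S, map_app, Rsum_app. simpl. lra. Qed.

Lemma sum_range_const k c : sum_range k (fun _ => c) = INR k * c.
Proof. unfold sum_range. rewrite Rsum_const, length_seq. auto. Qed.

Lemma sum_range_plus k F G : sum_range k (fun x => F x + G x) = sum_range k F + sum_range k G.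
Proof. apply Rsum_plus. Qed.

Lemma sum_range_scal k c F : sum_range k (fun x => c * F x) = c * sum_range k F.
Proof. apply Rsum_scal. Qed.

Lemma sum_range_pairs m F :
  sum_range (2 * m) F = sum_range m (fun i => F (2 * i)%nat + F (2 * i + 1)%nat).
Proof.
  induction m; [reflexivity|].
  replace (2 * S m)%nat with (S (S (2 * m))) by lia.
  rewrite !sum_range_S, IHm. replace (S (2 * m)) with (2 * m + 1)%nat by lia. lra.
Qed.

Lemma sum_range_split_pairs m k F : (2 * m <= k)%nat ->
  sum_range k F = sum_range m (fun i => F (2 * i)%nat + F (2 * i + 1)%nat)
                  + Rsum (map F (seq (2 * m) (k - 2 * m))).
Proof.
  intros H. rewrite <- sum_range_pairs. unfold sum_range.
  replace k with (2 * m + (k - 2 * m))%nat at 1 by lia.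
  rewrite seq_app, map_app, Rsum_app. reflexivity.
Qed.

Lemma bvecs_prod_from k : forall s (g : nat -> bool -> R),
  Rsum (map (fun b => Rprod (map (fun j => g j (nth (j - s)%nat b false)) (seq s k))) (bvecs k))
  = Rprod (map (fun j => g j true + g j false) (seq s k)).
Proof.
  induction k; intros s g; [simpl; lra|].
  simpl bvecs. rewrite Rsum_flat_map.
  transitivity (Rsum (map (fun v => (g s true + g s false) *
     Rprod (map (fun j => g j (nth (j - S s)%nat v false)) (seq (S s) k))) (bvecs k))).
  2:{ now rewrite Rsum_scal, IHk. }
  apply Rsum_ext. intros v _.
  assert (Htail : forall c, Rprod (map (fun j => g j (nth (j - s) (c :: v) false)) (seq (S s) k))
     = Rprod (map (fun j => g j (nth (j - S s) v false)) (seq (S s) k))).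
  { intros c. apply Rprod_ext. intros j Hj. apply in_seq in Hj.
    now replace (j - s)%nat with (S (j - S s)) by lia. }
  change (Rsum (map ?F [true :: v; false :: v])) with (F (true :: v) + (F (false :: v) + 0)).
  change (Rprod (map ?F (seq s (S k)))) with (F s * Rprod (map F (seq (S s) k))).
  cbv beta. rewrite !Htail, Nat.sub_diag. simpl. lra.
Qed.

Lemma bvecs_prod k (g : nat -> bool -> R) :
  Rsum (map (fun b => Rprod (map (fun j => g j (nth j b false)) (seq 0 k))) (bvecs k))
  = Rprod (map (fun j => g j true + g j false) (seq 0 k)).
Proof.
  rewrite <- bvecs_prod_from. apply Rsum_ext. intros b _. apply Rprod_ext.
  intros j _. now rewrite Nat.sub_0_r.
Qed.

Lemma transcripts_prod n k (g : list bool -> R) :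
  Rsum (map (fun t => Rprod (map g t)) (transcripts n k)) = Rsum (map g (bvecs k)) ^ n.
Proof.
  induction n; simpl; [lra|].
  rewrite Rsum_flat_map, <- IHn, Rsum_mult, (Rsum_swap (fun x y => g x * Rprod (map g y))).
  apply Rsum_ext. intros t _. now rewrite map_map.
Qed.

Lemma In_bvecs k b : In b (bvecs k) <-> length b = k.
Proof.
  revert b; induction k; intros b; simpl.
  - split; [intros [<-|[]]; auto | destruct b; simpl; auto; discriminate].
  - rewrite in_flat_map. split.
    + intros [v [Hv Hb]]. apply IHk in Hv. simpl in Hb.
      destruct Hb as [<-|[<-|[]]]; simpl; auto.
    + destruct b as [|c v]; simpl; [discriminate|]. intros H. exists v.
      split; [apply IHk; lia|]. destruct c; simpl; auto.
Qed.

Lemma NoDup_bvecs k : NoDup (bvecs k).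
Proof.
  induction k; simpl; [constructor; [auto | constructor]|].
  induction IHk; simpl; [constructor|].
  assert (Hfresh : forall c, ~ In (c :: x) (flat_map (fun v => [true :: v; false :: v]) l)).
  { intros c H1. apply in_flat_map in H1. destruct H1 as [v [Hv Hb]].
    destruct Hb as [Hb|[Hb|[]]]; inversion Hb; subst; auto. }
  constructor.
  - intros [H1|H1]; [discriminate | exact (Hfresh true H1)].
  - constructor; [exact (Hfresh false) | auto].
Qed.

Definition transp (p q j : nat) : nat :=
  if Nat.eqb j p then q else if Nat.eqb j q then p else j.

Lemma transp_invol p q j : transp p q (transp p q j) = j.
Proof.
  unfold transp. destruct (Nat.eqb_spec j p) as [->|Hp].
  - destruct (Nat.eqb_spec q p) as [->|]; [auto | now rewrite Nat.eqb_refl].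
  - destruct (Nat.eqb_spec j q) as [->|Hq]; [now rewrite Nat.eqb_refl|].
    apply Nat.eqb_neq in Hp, Hq. now rewrite Hp, Hq.
Qed.

Lemma transp_fix p q x : x <> p -> x <> q -> transp p q x = x.
Proof. intros Hp Hq. unfold transp. apply Nat.eqb_neq in Hp, Hq. now rewrite Hp, Hq. Qed.

Lemma transp_l p q : transp p q p = q.
Proof. unfold transp. now rewrite Nat.eqb_refl. Qed.

Lemma transp_r p q : p <> q -> transp p q q = p.
Proof. intros H. unfold transp. rewrite (proj2 (Nat.eqb_neq q p)), Nat.eqb_refl; auto. Qed.

Lemma transp_eqb p q x j : Nat.eqb (transp p q x) (transp p q j) = Nat.eqb x j.
Proof.
  destruct (Nat.eqb_spec x j) as [->|Hne]; [apply Nat.eqb_refl|].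
  apply Nat.eqb_neq. intros H. apply Hne. now rewrite <- (transp_invol p q x), H, transp_invol.
Qed.

Lemma transp_perm p q k : (p < k)%nat -> (q < k)%nat ->
  Permutation (map (transp p q) (seq 0 k)) (seq 0 k).
Proof.
  intros Hp Hq. apply nat_bijection_Permutation.
  - intros x Hx. unfold transp. destruct (Nat.eqb x p), (Nat.eqb x q); lia.
  - intros x y H. now rewrite <- (transp_invol p q x), <- (transp_invol p q y), H.
Qed.

Lemma Rsum_transp p q k (F : nat -> R) : (p < k)%nat -> (q < k)%nat ->
  Rsum (map (fun j => F (transp p q j)) (seq 0 k)) = Rsum (map F (seq 0 k)).
Proof. intros. rewrite <- (map_map (transp p q) F). now apply Rsum_perm, Permutation_map, transp_perm. Qed.

Lemma Rprod_transp p q k (F : nat -> R) : (p < k)%nat -> (q < k)%nat ->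
  Rprod (map (fun j => F (transp p q j)) (seq 0 k)) = Rprod (map F (seq 0 k)).
Proof. intros. rewrite <- (map_map (transp p q) F). now apply Rprod_perm, Permutation_map, transp_perm. Qed.

Definition swap_bits (p q : nat) (b : list bool) : list bool :=
  map (fun j => nth (transp p q j) b false) (seq 0 (length b)).

Lemma swap_bits_length p q b : length (swap_bits p q b) = length b.
Proof. unfold swap_bits. now rewrite length_map, length_seq. Qed.

Lemma nth_map_seq (f : nat -> bool) n j : (j < n)%nat ->
  nth j (map f (seq 0 n)) false = f j.
Proof.
  intros H. rewrite (nth_indep _ false (f 0%nat)) by (now rewrite length_map, length_seq).
  now rewrite map_nth, seq_nth.
Qed.

Lemma nth_swap_bits p q b j : (p < length b)%nat -> (q < length b)%nat ->
  nth j (swap_bits p q b) false = nth (transp p q j) b false.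
Proof.
  intros Hp Hq. destruct (Nat.lt_ge_cases j (length b)).
  - unfold swap_bits. now rewrite nth_map_seq.
  - rewrite !nth_overflow; rewrite ?swap_bits_length; auto.
    unfold transp. destruct (Nat.eqb_spec j p); [lia|]. destruct (Nat.eqb_spec j q); lia.
Qed.

Lemma swap_bits_invol p q b : (p < length b)%nat -> (q < length b)%nat ->
  swap_bits p q (swap_bits p q b) = b.
Proof.
  intros Hp Hq. apply nth_ext with (d := false) (d' := false).
  - now rewrite !swap_bits_length.
  - intros j _. rewrite !nth_swap_bits, ?transp_invol; rewrite ?swap_bits_length; auto.
Qed.

Lemma NoDup_map_on {A B} (f : A -> B) l :
  (forall x y, In x l -> In y l -> f x = f y -> x = y) -> NoDup l -> NoDup (map f l).
Proof.
  intros Hf Hl. induction Hl; simpl; constructor.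
  - intros Hin. apply in_map_iff in Hin. destruct Hin as [y [Hy Hy']].
    assert (y = x) by (apply Hf; simpl; auto). now subst.
  - apply IHHl. intros; apply Hf; simpl; auto.
Qed.

Lemma Rsum_bvecs_swap_bits p q k (F : list bool -> R) : (p < k)%nat -> (q < k)%nat ->
  Rsum (map (fun b => F (swap_bits p q b)) (bvecs k)) = Rsum (map F (bvecs k)).
Proof.
  intros Hp Hq. rewrite <- (map_map (swap_bits p q) F).
  apply Rsum_perm, Permutation_map, Permutation_map_same_l.
  - apply NoDup_map_on; [|apply NoDup_bvecs].
    intros x y Hx Hy H. apply In_bvecs in Hx, Hy.
    rewrite <- (swap_bits_invol p q x), <- (swap_bits_invol p q y), H; auto; lia.
  - intros y Hy. apply in_map_iff in Hy. destruct Hy as [x [<- Hx]].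
    apply In_bvecs in Hx. apply In_bvecs. now rewrite swap_bits_length.
Qed.

Lemma flip_prob_bounds eps : 0 < eps -> 0 < flip_prob eps < 1 / 2.
Proof.
  intros H. unfold flip_prob.
  assert (1 < exp (eps / 2)) by (rewrite <- exp_0; apply exp_increasing; lra).
  split; [apply Rinv_0_lt_compat; lra|].
  apply Rmult_lt_reg_l with (exp (eps / 2) + 1); [lra|]. rewrite Rinv_r; lra.
Qed.

Lemma rappor_prob_nonneg eps k x b : 0 < eps -> 0 <= rappor_prob eps k x b.
Proof.
  intros He. pose proof (flip_prob_bounds eps He). apply Rprod_nonneg.
  intros j _. destruct (Bool.eqb _ _); lra.
Qed.

Lemma rappor_prob_sum eps k x : Rsum (map (rappor_prob eps k x) (bvecs k)) = 1.
Proof.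
  unfold rappor_prob.
  rewrite (bvecs_prod k (fun j c => if Bool.eqb c (Nat.eqb x j)
                                    then 1 - flip_prob eps else flip_prob eps)).
  apply Rprod_one. intros j _. destruct (Nat.eqb x j); simpl; lra.
Qed.

Lemma rappor_prob_swap_bits eps k p q x b : (p < k)%nat -> (q < k)%nat -> length b = k ->
  rappor_prob eps k x (swap_bits p q b) = rappor_prob eps k (transp p q x) b.
Proof.
  intros Hp Hq Hb. unfold rappor_prob.
  rewrite <- (Rprod_transp p q k) by auto. apply Rprod_ext. intros j _.
  rewrite nth_swap_bits by lia.
  now rewrite transp_invol, <- (transp_eqb p q x (transp p q j)), transp_invol.
Qed.

(* Probability of [b] under the RAPPOR image of an all-zero input; [rappor_prob] is
   this times the likelihood ratio of the single coordinate [x]. *)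
Definition null_weight eps k (b : list bool) : R :=
  Rprod (map (fun j => if nth j b false then flip_prob eps else 1 - flip_prob eps) (seq 0 k)).

Definition rappor_odds eps : R := (1 - flip_prob eps) / flip_prob eps.

Definition bit_ratio eps x (b : list bool) : R :=
  if nth x b false then rappor_odds eps else / rappor_odds eps.

Lemma rappor_prob_factor eps k x b : 0 < eps -> (x < k)%nat ->
  rappor_prob eps k x b = null_weight eps k b * bit_ratio eps x b.
Proof.
  intros He Hx. pose proof (flip_prob_bounds eps He).
  unfold rappor_prob, null_weight, bit_ratio, rappor_odds.
  set (F := fun j => if Bool.eqb (nth j b false) (Nat.eqb x j)
                     then 1 - flip_prob eps else flip_prob eps).
  set (G := fun j => if nth j b false then flip_prob eps else 1 - flip_prob eps).
  assert (HG : G x <> 0) by (unfold G; destruct (nth x b false); lra).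
  apply Rmult_eq_reg_r with (G x); auto.
  rewrite (Rprod_point F G (seq 0 k) x (seq_NoDup _ _)).
  - unfold F, G. rewrite Nat.eqb_refl. destruct (nth x b false); simpl; field; lra.
  - apply in_seq; lia.
  - intros j _ Hj. unfold F, G. rewrite (proj2 (Nat.eqb_neq x j)) by auto.
    now destruct (nth j b false).
Qed.

Lemma null_weight_sum eps k : Rsum (map (null_weight eps k) (bvecs k)) = 1.
Proof.
  unfold null_weight.
  rewrite (bvecs_prod k (fun j c => if c then flip_prob eps else 1 - flip_prob eps)).
  apply Rprod_one. intros; lra.
Qed.

Lemma null_weight_pos eps k b : 0 < eps -> 0 < null_weight eps k b.
Proof.
  intros He. pose proof (flip_prob_bounds eps He). apply Rprod_pos.
  intros j _. destruct (nth j b false); lra.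
Qed.

Lemma report_prob_nonneg eps k p b : 0 < eps ->
  (forall x, (x < k)%nat -> 0 <= p x) -> 0 <= report_prob eps k p b.
Proof.
  intros He Hp. apply Rsum_nonneg. intros x Hx. apply in_seq in Hx.
  apply Rmult_le_pos; [apply Hp; lia | now apply rappor_prob_nonneg].
Qed.

Lemma report_prob_sum eps k p : Rsum (map (report_prob eps k p) (bvecs k)) = sum_range k p.
Proof.
  unfold report_prob, sum_range.
  rewrite (Rsum_swap (fun b x => p x * rappor_prob eps k x b)).
  apply Rsum_ext. intros x _. now rewrite Rsum_scal, rappor_prob_sum, Rmult_1_r.
Qed.

Lemma transcript_prob_sum eps k n p : is_dist k p ->
  Rsum (map (transcript_prob eps k p) (transcripts n k)) = 1.
Proof.
  intros [_ Hp]. unfold transcript_prob.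
  now rewrite transcripts_prod, report_prob_sum, Hp, pow1.
Qed.

Definition unif (k : nat) : nat -> R := fun _ => / INR k.

Definition unif_report eps k : list bool -> R := report_prob eps k (unif k).

Lemma unif_is_dist k : (1 <= k)%nat -> is_dist k (unif k).
Proof.
  intros Hk. assert (0 < INR k) by (apply lt_0_INR; lia).
  split; [intros; left; now apply Rinv_0_lt_compat|].
  unfold unif. rewrite sum_range_const. field. lra.
Qed.

Lemma unif_report_sum eps k : (1 <= k)%nat -> Rsum (map (unif_report eps k) (bvecs k)) = 1.
Proof. intros Hk. unfold unif_report. rewrite report_prob_sum. apply unif_is_dist, Hk. Qed.

Lemma rappor_odds_exp eps : rappor_odds eps = exp (eps / 2).
Proof.
  unfold rappor_odds, flip_prob. pose proof (exp_pos (eps / 2)).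
  field; lra.
Qed.

Lemma rappor_odds_ge1 eps : 0 <= eps -> 1 <= rappor_odds eps.
Proof. intros He. rewrite rappor_odds_exp. pose proof (exp_ineq1_le (eps / 2)). lra. Qed.

Lemma unif_report_swap_bits eps k p q b : (p < k)%nat -> (q < k)%nat -> length b = k ->
  unif_report eps k (swap_bits p q b) = unif_report eps k b.
Proof.
  intros. unfold unif_report, report_prob, sum_range.
  rewrite <- (Rsum_transp p q k (fun x => unif k x * rappor_prob eps k x b)) by auto.
  apply Rsum_ext. intros x _. now rewrite rappor_prob_swap_bits.
Qed.

Lemma null_weight_le_unif_report eps k b : 0 < eps -> (1 <= k)%nat ->
  null_weight eps k b <= rappor_odds eps * unif_report eps k b.
Proof.
  intros He Hk. pose proof (null_weight_pos eps k b He).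
  pose proof (rappor_odds_ge1 eps ltac:(lra)) as Ha.
  assert (HK : 0 < INR k) by (apply lt_0_INR; lia).
  assert (Hlow : null_weight eps k b * / rappor_odds eps <= unif_report eps k b).
  { unfold unif_report, report_prob.
    replace (null_weight eps k b * / rappor_odds eps)
      with (sum_range k (fun _ => / INR k * (null_weight eps k b * / rappor_odds eps)))
      by (rewrite sum_range_const; field; lra).
    apply Rsum_le. intros x Hx. apply in_seq in Hx. unfold unif.
    rewrite rappor_prob_factor by (auto; lia).
    apply Rmult_le_compat_l; [left; now apply Rinv_0_lt_compat|].
    apply Rmult_le_compat_l; [lra|]. unfold bit_ratio.
    destruct (nth x b false); [|lra].
    assert (/ rappor_odds eps <= 1) by (rewrite <- Rinv_1; apply Rinv_le_contravar; lra).
    lra. }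
  apply Rmult_le_compat_l with (r := rappor_odds eps) in Hlow; [|lra].
  rewrite Rmult_comm, Rmult_assoc, Rinv_l, Rmult_1_r in Hlow; lra.
Qed.

Lemma unif_report_pos eps k b : 0 < eps -> (1 <= k)%nat -> 0 < unif_report eps k b.
Proof.
  intros He Hk. pose proof (null_weight_pos eps k b He).
  pose proof (null_weight_le_unif_report eps k b He Hk).
  pose proof (rappor_odds_ge1 eps ltac:(lra)). nra.
Qed.

Definition pair_diff eps k i b : R :=
  rappor_prob eps k (2 * i) b - rappor_prob eps k (2 * i + 1) b.

Definition rappor_chi_const eps : R :=
  (rappor_odds eps - / rappor_odds eps) ^ 2 * rappor_odds eps.

Lemma pair_diff_sum eps k i : Rsum (map (pair_diff eps k i) (bvecs k)) = 0.
Proof. unfold pair_diff. rewrite Rsum_minus, !rappor_prob_sum. ring. Qed.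

Lemma pair_diff_sq_le eps k i b : 0 < eps -> (2 * i + 1 < k)%nat ->
  pair_diff eps k i b ^ 2 / unif_report eps k b <= rappor_chi_const eps * null_weight eps k b.
Proof.
  intros He Hk. pose proof (null_weight_pos eps k b He) as Hw.
  pose proof (unif_report_pos eps k b He ltac:(lia)) as HU.
  pose proof (null_weight_le_unif_report eps k b He ltac:(lia)) as HwU.
  pose proof (rappor_odds_ge1 eps ltac:(lra)) as Ha.
  set (a := rappor_odds eps) in *. set (w := null_weight eps k b) in *.
  set (U := unif_report eps k b) in *.
  assert (Hai : 0 < / a <= 1) by (split; [apply Rinv_0_lt_compat | rewrite <- Rinv_1;
    apply Rinv_le_contravar]; lra).
  assert (Hdiff : (bit_ratio eps (2 * i) b - bit_ratio eps (2 * i + 1) b) ^ 2 <= (a - / a) ^ 2).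
  { unfold bit_ratio; fold a.
    destruct (nth (2 * i) b false), (nth (2 * i + 1) b false); simpl; nra. }
  unfold pair_diff. rewrite !rappor_prob_factor by (auto; lia). fold w.
  replace ((w * bit_ratio eps (2 * i) b - w * bit_ratio eps (2 * i + 1) b) ^ 2 / U)
    with (w * (bit_ratio eps (2 * i) b - bit_ratio eps (2 * i + 1) b) ^ 2 * (w / U))
    by (field; lra).
  assert (HwU' : w / U <= a) by (apply Rmult_le_reg_r with U; [lra|]; unfold Rdiv;
    rewrite Rmult_assoc, Rinv_l; lra).
  unfold rappor_chi_const; fold a.
  assert (0 <= (bit_ratio eps (2 * i) b - bit_ratio eps (2 * i + 1) b) ^ 2) by apply pow2_ge_0.
  assert (0 <= w / U) by (unfold Rdiv; apply Rmult_le_pos; [lra | left; now apply Rinv_0_lt_compat]).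
  assert (0 <= (a - / a) ^ 2) by apply pow2_ge_0.
  replace ((a - / a) ^ 2 * a * w) with (w * (a - / a) ^ 2 * a) by ring.
  apply Rmult_le_compat; try nra.
Qed.

Lemma rappor_chi_const_bounds eps : 0 < eps <= 1 -> 0 <= rappor_chi_const eps <= 5 * eps ^ 2.
Proof.
  intros He. unfold rappor_chi_const. rewrite rappor_odds_exp.
  set (E := exp (eps / 2)).
  assert (HE1 : 1 <= E) by (unfold E; pose proof (exp_ineq1_le (eps / 2)); lra).
  assert (HiE : 1 - eps / 2 <= / E)
    by (unfold E; rewrite <- exp_Ropp; pose proof (exp_ineq1_le (- (eps / 2))); lra).
  assert (HE2 : E <= 1 + eps).
  { assert (E * (1 - eps / 2) <= 1).
    { replace 1 with (E * / E) at 2 by (field; lra). apply Rmult_le_compat_l; lra. }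
    nra. }
  assert (HiE2 : / E <= 1) by (rewrite <- Rinv_1; apply Rinv_le_contravar; lra).
  assert ((E - / E) ^ 2 <= (3 / 2 * eps) ^ 2) by (apply pow_incr; lra).
  assert ((E - / E) ^ 2 * E <= (3 / 2 * eps) ^ 2 * (1 + eps))
    by (apply Rmult_le_compat; auto; try lra; apply pow2_ge_0).
  split; [apply Rmult_le_pos; [apply pow2_ge_0 | lra] | nra].
Qed.

Definition sign (z : list bool) (i : nat) : R := if nth i z false then 1 else -1.

(* The hard instance indexed by [z] in {0,1}^m moves mass [eta * sign z i] from
   symbol [2i+1] to symbol [2i]; symbols [>= 2m] keep mass [1/k]. *)
Definition pert_dir (m : nat) (z : list bool) (x : nat) : R :=
  if Nat.ltb x (2 * m) then
    (if Nat.even x then sign z (Nat.div2 x) else - sign z (Nat.div2 x))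
  else 0.

Definition perturbed (k m : nat) (eta : R) (z : list bool) (x : nat) : R :=
  / INR k + eta * pert_dir m z x.

Lemma Rabs_sign z i : Rabs (sign z i) = 1.
Proof. unfold sign; destruct (nth i z false); [apply Rabs_R1 | rewrite Rabs_left; lra]. Qed.

Lemma pert_dir_even m z i : (i < m)%nat -> pert_dir m z (2 * i) = sign z i.
Proof.
  intros H. unfold pert_dir. rewrite (proj2 (Nat.ltb_lt _ _)) by lia.
  now rewrite Nat.even_even, Nat.div2_double.
Qed.

Lemma pert_dir_odd m z i : (i < m)%nat -> pert_dir m z (2 * i + 1) = - sign z i.
Proof.
  intros H. unfold pert_dir. rewrite (proj2 (Nat.ltb_lt _ _)) by lia.
  now rewrite Nat.even_odd, Nat.div2_odd'.
Qed.

Lemma pert_dir_out m z x : (2 * m <= x)%nat -> pert_dir m z x = 0.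
Proof. intros H. unfold pert_dir. now rewrite (proj2 (Nat.ltb_ge _ _)) by lia. Qed.

Lemma pert_dir_bounds m z x : -1 <= pert_dir m z x <= 1.
Proof.
  unfold pert_dir, sign. destruct (Nat.ltb x (2 * m)); [|lra].
  destruct (Nat.even x), (nth (Nat.div2 x) z false); lra.
Qed.

Lemma sum_pert_dir m k z (F : nat -> R) : (2 * m <= k)%nat ->
  sum_range k (fun x => pert_dir m z x * F x)
  = sum_range m (fun i => sign z i * (F (2 * i)%nat - F (2 * i + 1)%nat)).
Proof.
  intros H. rewrite (sum_range_split_pairs m k) by auto.
  rewrite Rsum_zero, Rplus_0_r.
  2:{ intros x Hx. apply in_seq in Hx. rewrite pert_dir_out by lia. lra. }
  apply Rsum_ext. intros i Hi. apply in_seq in Hi.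
  rewrite pert_dir_even, pert_dir_odd by lia. ring.
Qed.

Lemma perturbed_is_dist k m eta z : (1 <= k)%nat -> (2 * m <= k)%nat ->
  0 <= eta <= / INR k -> is_dist k (perturbed k m eta z).
Proof.
  intros Hk Hm He. split.
  - intros x _. unfold perturbed. pose proof (pert_dir_bounds m z x). nra.
  - unfold perturbed. rewrite sum_range_plus, sum_range_const, sum_range_scal.
    replace (sum_range k (pert_dir m z)) with (sum_range k (fun x => pert_dir m z x * 1))
      by (apply Rsum_ext; intros; ring).
    rewrite sum_pert_dir by auto.
    replace (sum_range m _) with 0 by (symmetry; apply Rsum_zero; intros; ring).
    field. apply not_0_INR. lia.
Qed.

Lemma perturbed_dTV k m eta z : (2 * m <= k)%nat -> 0 <= eta ->
  dTV_unif k (perturbed k m eta z) = INR m * eta.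
Proof.
  intros H He. unfold dTV_unif. rewrite (sum_range_split_pairs m k) by auto.
  rewrite Rsum_zero, Rplus_0_r.
  2:{ intros x Hx. apply in_seq in Hx. unfold perturbed. rewrite pert_dir_out by lia.
      replace (/ INR k + eta * 0 - / INR k) with 0 by ring. apply Rabs_R0. }
  unfold sum_range. rewrite (Rsum_ext _ (fun _ => 2 * eta)), Rsum_const, length_seq; [field|].
  intros i Hi. apply in_seq in Hi. unfold perturbed. rewrite pert_dir_even, pert_dir_odd by lia.
  replace (/ INR k + eta * sign z i - / INR k) with (eta * sign z i) by ring.
  replace (/ INR k + eta * - sign z i - / INR k) with (- (eta * sign z i)) by ring.
  rewrite Rabs_Ropp, Rabs_mult, Rabs_sign, Rabs_pos_eq by auto. ring.
Qed.

Definition pert_report_dev eps k m z b : R :=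
  sum_range m (fun i => sign z i * pair_diff eps k i b).

Lemma perturbed_report eps k m eta z b : (2 * m <= k)%nat ->
  report_prob eps k (perturbed k m eta z) b
  = unif_report eps k b + eta * pert_report_dev eps k m z b.
Proof.
  intros H. unfold report_prob, unif_report, perturbed, pert_report_dev, pair_diff.
  unfold sum_range at 1 2. rewrite (Rsum_ext _ (fun x => unif k x * rappor_prob eps k x b
                                + eta * (pert_dir m z x * rappor_prob eps k x b)))
    by (intros; unfold unif; ring).
  rewrite Rsum_plus, Rsum_scal.
  fold (sum_range k (fun x => pert_dir m z x * rappor_prob eps k x b)).
  now rewrite sum_pert_dir.
Qed.

Lemma pert_report_dev_sum eps k m z : Rsum (map (pert_report_dev eps k m z) (bvecs k)) = 0.
Proof.
  unfold pert_report_dev, sum_range.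
  rewrite (Rsum_swap (fun b i => sign z i * pair_diff eps k i b)).
  apply Rsum_zero. intros i _. rewrite Rsum_scal, pair_diff_sum. ring.
Qed.

Definition chi_cross eps k i j : R :=
  Rsum (map (fun b => pair_diff eps k i b * pair_diff eps k j b / unif_report eps k b) (bvecs k)).

(* Swapping the bits [2j] and [2j+1] of the report negates [pair_diff j] and fixes
   [pair_diff i] and the null likelihood. *)
Lemma chi_cross_offdiag eps k i j : i <> j -> (2 * i + 1 < k)%nat -> (2 * j + 1 < k)%nat ->
  chi_cross eps k i j = 0.
Proof.
  intros Hij Hi Hj. unfold chi_cross.
  set (F := fun b => pair_diff eps k i b * pair_diff eps k j b / unif_report eps k b).
  assert (E : Rsum (map (fun b => F (swap_bits (2 * j) (2 * j + 1) b)) (bvecs k))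
              = Rsum (map (fun b => -1 * F b) (bvecs k))).
  { apply Rsum_ext. intros b Hb. apply In_bvecs in Hb. unfold F, pair_diff.
    rewrite !rappor_prob_swap_bits, unif_report_swap_bits by (auto; lia).
    rewrite (transp_fix _ _ (2 * i)), (transp_fix _ _ (2 * i + 1)) by lia.
    rewrite transp_l, transp_r by lia. unfold Rdiv. ring. }
  rewrite Rsum_bvecs_swap_bits, Rsum_scal in E by lia. lra.
Qed.

Lemma chi_cross_diag_bounds eps k i : 0 < eps -> (2 * i + 1 < k)%nat ->
  0 <= chi_cross eps k i i <= rappor_chi_const eps.
Proof.
  intros He Hi. unfold chi_cross. split.
  - apply Rsum_nonneg. intros b _. pose proof (unif_report_pos eps k b He ltac:(lia)).
    apply Rmult_le_pos; [nra | left; now apply Rinv_0_lt_compat].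
  - rewrite <- (Rmult_1_r (rappor_chi_const eps)), <- (null_weight_sum eps k), <- Rsum_scal.
    apply Rsum_le. intros b _. pose proof (pair_diff_sq_le eps k i b He Hi).
    simpl in *. now rewrite Rmult_1_r in *.
Qed.

Definition overlap eps k m eta z z' : R :=
  1 + eta ^ 2 * sum_range m (fun i => sign z i * sign z' i * chi_cross eps k i i).

Lemma perturbed_report_overlap eps k m eta z z' : 0 < eps -> (1 <= k)%nat -> (2 * m <= k)%nat ->
  Rsum (map (fun b => report_prob eps k (perturbed k m eta z) b
                      * report_prob eps k (perturbed k m eta z') b / unif_report eps k b) (bvecs k))
  = overlap eps k m eta z z'.
Proof.
  intros He Hk Hm. unfold overlap.
  rewrite (Rsum_ext _ (fun b => unif_report eps k b + eta * pert_report_dev eps k m z b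
    + eta * pert_report_dev eps k m z' b + eta ^ 2 * (pert_report_dev eps k m z b
    * pert_report_dev eps k m z' b / unif_report eps k b))).
  2:{ intros b _. rewrite !perturbed_report by auto. field.
      apply Rgt_not_eq, unif_report_pos; auto. }
  rewrite !Rsum_plus, !Rsum_scal, unif_report_sum, !pert_report_dev_sum by auto. f_equal. ring_simplify. f_equal.
  unfold pert_report_dev.
  rewrite (Rsum_ext _ (fun b => Rsum (map (fun i => Rsum (map (fun j =>
       sign z i * sign z' j * (pair_diff eps k i b * pair_diff eps k j b / unif_report eps k b))
       (seq 0 m))) (seq 0 m)))).
  2:{ intros b _. unfold sum_range. rewrite Rsum_mult. unfold Rdiv. rewrite <- Rsum_scal_r.
      apply Rsum_ext. intros i _. rewrite <- Rsum_scal_r. apply Rsum_ext. intros j _. ring. }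
  rewrite Rsum_swap. unfold sum_range. f_equal. apply Rsum_ext. intros i Hi. apply in_seq in Hi.
  rewrite Rsum_swap, (Rsum_single _ _ i (seq_NoDup _ _)).
  - now rewrite Rsum_scal.
  - apply in_seq; lia.
  - intros j Hj Hji. apply in_seq in Hj. rewrite Rsum_scal.
    fold (chi_cross eps k i j). rewrite chi_cross_offdiag by lia. ring.
Qed.

Definition sign_avg m (F : list bool -> R) : R := Rsum (map (fun z => (/ 2) ^ m * F z) (bvecs m)).

Lemma sign_avg_const m c : sign_avg m (fun _ => c) = c.
Proof.
  unfold sign_avg. rewrite Rsum_scal_r. rewrite <- (Rmult_1_l c) at 2. f_equal.
  pose proof (bvecs_prod m (fun _ _ => / 2)) as E. cbv beta in E.
  rewrite (Rprod_ext (fun _ => / 2 + / 2) (fun _ => 1)), !Rprod_const_seq, pow1 in E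
    by (intros; lra).
  exact E.
Qed.

Lemma sign_avg_ext m F G : (forall z, F z = G z) -> sign_avg m F = sign_avg m G.
Proof. intros H. apply Rsum_ext. intros z _. now rewrite H. Qed.

Lemma sign_avg_le m F G : (forall z, F z <= G z) -> sign_avg m F <= sign_avg m G.
Proof.
  intros H. apply Rsum_le. intros z _. apply Rmult_le_compat_l; [apply pow_le; lra | auto].
Qed.

Lemma sign_avg_exp m z s :
  sign_avg m (fun z' => exp (sum_range m (fun i => sign z i * sign z' i * s i)))
  = Rprod (map (fun j => (exp (s j) + exp (- s j)) / 2) (seq 0 m)).
Proof.
  set (g := fun j (c : bool) => / 2 * exp (sign z j * (if c then 1 else -1) * s j)).
  unfold sign_avg.
  rewrite (Rsum_ext _ (fun z' => Rprod (map (fun j => g j (nth j z' false)) (seq 0 m)))).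
  2:{ intros z' _. unfold sum_range. rewrite exp_Rsum, <- (Rprod_const_seq (/ 2) 0 m), <- Rprod_mult.
      reflexivity. }
  rewrite bvecs_prod. apply Rprod_ext. intros j _. unfold g, sign.
  destruct (nth j z false).
  - replace (1 * 1 * s j) with (s j) by ring. replace (1 * -1 * s j) with (- s j) by ring. lra.
  - replace (-1 * 1 * s j) with (- s j) by ring. replace (-1 * -1 * s j) with (s j) by ring. lra.
Qed.

Lemma exp_le_inv_1m x : x < 1 -> exp x <= / (1 - x).
Proof.
  intros H. pose proof (exp_ineq1_le (- x)) as Hx. rewrite exp_Ropp in Hx.
  pose proof (exp_pos x).
  apply Rmult_le_reg_r with (1 - x); [lra|]. rewrite Rinv_l by lra.
  apply Rmult_le_reg_l with (/ exp x); [now apply Rinv_0_lt_compat|].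
  rewrite Rmult_1_r, <- Rmult_assoc, Rinv_l by lra. lra.
Qed.

Lemma cosh_le_inv x : Rabs x < 1 -> (exp x + exp (- x)) / 2 <= / (1 - x ^ 2).
Proof.
  intros H. apply Rabs_def2 in H.
  pose proof (exp_le_inv_1m x). pose proof (exp_le_inv_1m (- x)).
  assert (/ (1 - x) + / (1 - - x) = 2 * / (1 - x ^ 2)) by (field; repeat split; nra).
  lra.
Qed.

Lemma pow_inv_1m_le m y : 0 <= y <= 1 -> INR m * y < 1 ->
  (/ (1 - y)) ^ m <= / (1 - INR m * y).
Proof.
  intros Hy H.
  assert (Hb : 1 - INR m * y <= (1 - y) ^ m).
  { clear H. induction m; [simpl; lra|]. rewrite S_INR. simpl. pose proof (pos_INR m). nra. }
  rewrite pow_inv. apply Rinv_le_contravar; lra.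
Qed.

Lemma sign_avg2_exp_le m (s : nat -> R) S : 0 <= S < 1 ->
  (forall i, (i < m)%nat -> Rabs (s i) <= S) -> INR m * S ^ 2 < 1 ->
  sign_avg m (fun z => sign_avg m (fun z' =>
    exp (sum_range m (fun i => sign z i * sign z' i * s i))))
  <= / (1 - INR m * S ^ 2).
Proof.
  intros HS Hs Hm.
  rewrite (sign_avg_ext m _ (fun _ => Rprod (map (fun j => (exp (s j) + exp (- s j)) / 2)
                                                  (seq 0 m))))
    by (intros z; apply sign_avg_exp).
  rewrite sign_avg_const.
  apply Rle_trans with (Rprod (map (fun _ => / (1 - S ^ 2)) (seq 0 m))).
  - apply Rprod_le. intros j Hj. apply in_seq in Hj.
    pose proof (Hs j ltac:(lia)) as Hsj. pose proof (exp_pos (s j)). pose proof (exp_pos (- s j)).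
    split; [lra|].
    eapply Rle_trans; [apply cosh_le_inv; lra|].
    pose proof (Rle_abs (s j)). pose proof (Rle_abs (- s j)). rewrite Rabs_Ropp in *.
    apply Rinv_le_contravar; nra.
  - rewrite Rprod_const_seq. apply pow_inv_1m_le; [split|]; nra.
Qed.

Lemma Rsum_sign_avg {A} m (F : A -> list bool -> R) l :
  Rsum (map (fun t => sign_avg m (F t)) l) = sign_avg m (fun z => Rsum (map (fun t => F t z) l)).
Proof.
  unfold sign_avg. rewrite (Rsum_swap (fun t z => (/ 2) ^ m * F t z)).
  apply Rsum_ext. intros z _. now rewrite Rsum_scal.
Qed.

Lemma sign_avg_scal_r m F c : sign_avg m F * c = sign_avg m (fun z => F z * c).
Proof. unfold sign_avg. rewrite <- Rsum_scal_r. apply Rsum_ext. intros; ring. Qed.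

Lemma sign_avg_mult m F G :
  sign_avg m F * sign_avg m G = sign_avg m (fun z => sign_avg m (fun z' => F z * G z')).
Proof.
  unfold sign_avg. rewrite Rsum_mult. apply Rsum_ext. intros z _.
  rewrite <- Rsum_scal. apply Rsum_ext. intros; ring.
Qed.

(* A test accepting [U] with probability 1/3 more than [M] forces a chi-square
   divergence of at least 1/9, via [(U - M) D <= U/6 + 3/2 (U - M)^2 / U]. *)
Lemma chi2_ge_of_test {A} (U M D : A -> R) l :
  (forall t, In t l -> 0 < U t) -> (forall t, In t l -> 0 <= D t <= 1) ->
  Rsum (map U l) = 1 -> Rsum (map M l) = 1 ->
  Rsum (map (fun t => M t * D t) l) + 1 / 3 <= Rsum (map (fun t => U t * D t) l) ->
  10 / 9 <= Rsum (map (fun t => M t ^ 2 / U t) l).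
Proof.
  intros HU HD HU1 HM1 Hsep.
  assert (Hpt : forall t, In t l ->
    U t * D t - M t * D t <= U t / 6 + 3 / 2 * (M t ^ 2 / U t - 2 * M t + U t)).
  { intros t Ht. pose proof (HU t Ht). pose proof (HD t Ht).
    replace (M t ^ 2 / U t - 2 * M t + U t) with ((U t - M t) ^ 2 / U t) by (field; lra).
    apply Rmult_le_reg_l with (U t); auto.
    replace (U t * (U t / 6 + 3 / 2 * ((U t - M t) ^ 2 / U t)))
      with (U t * U t / 6 + 3 / 2 * (U t - M t) ^ 2) by (field; lra).
    assert (0 <= (U t * D t / 3 - (U t - M t)) ^ 2) by apply pow2_ge_0.
    assert (U t * U t * (D t * D t) <= U t * U t) by (rewrite <- (Rmult_1_r (U t * U t)) at 2;
      apply Rmult_le_compat_l; nra).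
    nra. }
  apply Rsum_le in Hpt.
  rewrite Rsum_minus, Rsum_plus, Rsum_scal, Rsum_plus, Rsum_minus, Rsum_scal in Hpt.
  unfold Rdiv at 1 in Hpt. rewrite Rsum_scal_r in Hpt. lra.
Qed.

Lemma transcript_chi_prod eps k n p q : 0 < eps -> (1 <= k)%nat ->
  Rsum (map (fun t => transcript_prob eps k p t * transcript_prob eps k q t
                      / transcript_prob eps k (unif k) t) (transcripts n k))
  = Rsum (map (fun b => report_prob eps k p b * report_prob eps k q b / unif_report eps k b)
              (bvecs k)) ^ n.
Proof.
  intros He Hk. rewrite <- transcripts_prod. apply Rsum_ext. intros t _.
  unfold transcript_prob, Rdiv. rewrite !Rprod_mult, Rprod_inv; [reflexivity|].
  intros b _. apply Rgt_not_eq, unif_report_pos; auto.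
Qed.

Definition mixture eps k m eta (t : list (list bool)) : R :=
  sign_avg m (fun z => transcript_prob eps k (perturbed k m eta z) t).

Section Mixture.

Variables (eps : R) (k n m : nat) (eta : R).
Hypotheses (Heps : 0 < eps) (Hk : (1 <= k)%nat) (Hm : (2 * m <= k)%nat)
  (Heta : 0 <= eta <= / INR k).

Lemma mixture_sum : Rsum (map (mixture eps k m eta) (transcripts n k)) = 1.
Proof.
  unfold mixture. rewrite Rsum_sign_avg, <- (sign_avg_const m 1).
  apply sign_avg_ext. intros z. apply transcript_prob_sum, perturbed_is_dist; auto.
Qed.

Lemma mixture_accept D :
  Rsum (map (fun t => mixture eps k m eta t * D t) (transcripts n k))
  = sign_avg m (fun z => accept_prob eps k n (perturbed k m eta z) D).
Proof.
  unfold mixture. rewrite (Rsum_ext _ (fun t => sign_avg m (fun z =>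
    transcript_prob eps k (perturbed k m eta z) t * D t))) by (intros; apply sign_avg_scal_r).
  now rewrite Rsum_sign_avg.
Qed.

Lemma mixture_chi2 :
  Rsum (map (fun t => mixture eps k m eta t ^ 2 / transcript_prob eps k (unif k) t)
            (transcripts n k))
  = sign_avg m (fun z => sign_avg m (fun z' => overlap eps k m eta z z' ^ n)).
Proof.
  rewrite (Rsum_ext _ (fun t => sign_avg m (fun z => sign_avg m (fun z' =>
    transcript_prob eps k (perturbed k m eta z) t * transcript_prob eps k (perturbed k m eta z') t
    / transcript_prob eps k (unif k) t)))).
  2:{ intros t _. unfold mixture, Rdiv. rewrite <- Rsqr_pow2. unfold Rsqr. rewrite sign_avg_mult, sign_avg_scal_r.
      apply sign_avg_ext. intros z. now rewrite sign_avg_scal_r. }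
  rewrite Rsum_sign_avg. apply sign_avg_ext. intros z.
  rewrite Rsum_sign_avg. apply sign_avg_ext. intros z'.
  now rewrite transcript_chi_prod, perturbed_report_overlap.
Qed.

Lemma overlap_pow_le_exp z z' :
  overlap eps k m eta z z' ^ n
  <= exp (sum_range m (fun i => sign z i * sign z' i * (INR n * eta ^ 2 * chi_cross eps k i i))).
Proof.
  assert (H0 : 0 <= overlap eps k m eta z z').
  { rewrite <- perturbed_report_overlap by auto. apply Rsum_nonneg. intros b _.
    pose proof (unif_report_pos eps k b Heps Hk).
    pose proof (report_prob_nonneg eps k (perturbed k m eta z) b Heps
                  (proj1 (perturbed_is_dist k m eta z Hk Hm Heta))).
    pose proof (report_prob_nonneg eps k (perturbed k m eta z') b Heps
                  (proj1 (perturbed_is_dist k m eta z' Hk Hm Heta))).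
    apply Rmult_le_pos; [nra | left; now apply Rinv_0_lt_compat]. }
  apply Rle_trans with (exp (overlap eps k m eta z z' - 1) ^ n).
  - apply pow_incr. split; auto. pose proof (exp_ineq1_le (overlap eps k m eta z z' - 1)). lra.
  - rewrite exp_pow. right. f_equal. unfold overlap.
    replace (1 + eta ^ 2 * sum_range m (fun i => sign z i * sign z' i * chi_cross eps k i i) - 1)
      with (eta ^ 2 * sum_range m (fun i => sign z i * sign z' i * chi_cross eps k i i)) by ring.
    rewrite <- !sum_range_scal. apply Rsum_ext. intros; ring.
Qed.

Lemma mixture_chi2_le S : 0 <= S < 1 -> INR m * S ^ 2 < 1 ->
  INR n * eta ^ 2 * rappor_chi_const eps <= S ->
  Rsum (map (fun t => mixture eps k m eta t ^ 2 / transcript_prob eps k (unif k) t)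
            (transcripts n k))
  <= / (1 - INR m * S ^ 2).
Proof.
  intros HS HmS HC. rewrite mixture_chi2.
  eapply Rle_trans; [|apply (sign_avg2_exp_le m (fun i => INR n * eta ^ 2 * chi_cross eps k i i));
                      auto].
  - apply sign_avg_le. intros z. apply sign_avg_le. intros z'. apply overlap_pow_le_exp.
  - intros i Hi. pose proof (chi_cross_diag_bounds eps k i Heps ltac:(lia)).
    assert (0 <= INR n * eta ^ 2) by (apply Rmult_le_pos; [apply pos_INR | apply pow2_ge_0]).
    rewrite Rabs_pos_eq by (apply Rmult_le_pos; lra).
    eapply Rle_trans; [|exact HC]. apply Rmult_le_compat_l; lra.
Qed.

End Mixture.

Lemma tester_mixture_chi2_ge eps k n m eta gamma D :
  0 < eps -> (1 <= k)%nat -> (2 * m <= k)%nat -> 0 <= eta <= / INR k ->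
  gamma < INR m * eta -> valid_rule D -> is_uniformity_tester eps k n gamma D ->
  10 / 9 <= Rsum (map (fun t => mixture eps k m eta t ^ 2 / transcript_prob eps k (unif k) t)
                      (transcripts n k)).
Proof.
  intros He Hk Hm Heta Hfar HD Ht.
  apply (chi2_ge_of_test (transcript_prob eps k (unif k)) (mixture eps k m eta) D).
  - intros t _. apply Rprod_pos. intros b _. now apply unif_report_pos.
  - intros t _. apply HD.
  - now apply transcript_prob_sum, unif_is_dist.
  - now apply mixture_sum.
  - rewrite mixture_accept by auto.
    assert (Hrej : forall z, accept_prob eps k n (perturbed k m eta z) D <= 1 / 3).
    { intros z. destruct (Ht _ (perturbed_is_dist k m eta z Hk Hm Heta)) as [_ Hrej].
      rewrite perturbed_dTV in Hrej by (auto; lra). specialize (Hrej Hfar). lra. }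
    apply (sign_avg_le m) in Hrej. rewrite sign_avg_const in Hrej.
    destruct (Ht _ (unif_is_dist k Hk)) as [Hacc _].
    specialize (Hacc (fun i _ => eq_refl)). unfold accept_prob in Hacc. lra.
Qed.

Lemma half_pairs k : (2 <= k)%nat ->
  (2 * Nat.div2 k <= k)%nat /\ 1 <= INR (Nat.div2 k) /\
  2 * INR (Nat.div2 k) <= INR k /\ INR k < 4 * INR (Nat.div2 k).
Proof.
  intros Hk. pose proof (Nat.div2_odd k) as Hodd.
  assert (H : (2 * Nat.div2 k <= k < 4 * Nat.div2 k)%nat) by (destruct (Nat.odd k); simpl in *; lia).
  destruct H as [H2 H4]. apply le_INR in H2 as H2'. apply lt_INR in H4 as H4'.
  rewrite mult_INR in H2', H4'. simpl in H2', H4'.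
  repeat split; try lra; auto. apply (le_INR 1). lia.
Qed.

Lemma hard_scale k gamma : (2 <= k)%nat -> 0 < gamma <= 1 / 4 ->
  0 <= 4 * gamma / INR k <= / INR k /\ gamma < INR (Nat.div2 k) * (4 * gamma / INR k).
Proof.
  intros Hk Hg. destruct (half_pairs k Hk) as (_ & _ & _ & H4).
  assert (HK : 0 < INR k) by (apply lt_0_INR; lia).
  assert (HiK : 0 < / INR k) by now apply Rinv_0_lt_compat.
  unfold Rdiv. split; [split; nra|].
  replace (INR (Nat.div2 k) * (4 * gamma * / INR k))
    with (gamma * (4 * INR (Nat.div2 k) * / INR k)) by ring.
  assert (1 < 4 * INR (Nat.div2 k) * / INR k).
  { apply Rmult_lt_reg_r with (INR k); auto. rewrite Rmult_assoc, Rinv_l; lra. }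
  nra.
Qed.

(* With [eta = 4 gamma / k] and [C <= 5 eps^2], [n < k^(3/2) / (300 gamma^2 eps^2)]
   makes [m (n eta^2 C)^2 <= 3200 (n gamma^2 eps^2)^2 / k^3] small. *)
Lemma few_samples_small_overlap (K M N gamma eps C : R) :
  0 < K -> 0 <= M -> 2 * M <= K -> 0 <= N -> 0 < gamma -> 0 < eps -> 0 <= C <= 5 * eps ^ 2 ->
  N < 1 / 300 * (K * sqrt K) / (gamma ^ 2 * eps ^ 2) ->
  M * (N * (4 * gamma / K) ^ 2 * C) ^ 2 <= 1 / 20.
Proof.
  intros HK HM HMK HN Hg He HC Hn.
  set (P := N * gamma ^ 2 * eps ^ 2).
  assert (Hge : 0 < gamma ^ 2 * eps ^ 2) by (apply Rmult_lt_0_compat; apply pow_lt; lra).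
  assert (HP0 : 0 <= P) by (unfold P; rewrite Rmult_assoc; apply Rmult_le_pos; lra).
  assert (HP : P < 1 / 300 * (K * sqrt K)).
  { unfold P. rewrite Rmult_assoc. apply Rmult_lt_reg_r with (/ (gamma ^ 2 * eps ^ 2));
      [now apply Rinv_0_lt_compat|].
    rewrite Rmult_assoc, Rinv_r, Rmult_1_r by lra. exact Hn. }
  assert (HP2 : P ^ 2 < (1 / 300) ^ 2 * K ^ 3).
  { pose proof (sqrt_pos K). pose proof (sqrt_sqrt K ltac:(lra)).
    replace ((1 / 300) ^ 2 * K ^ 3) with ((1 / 300 * (K * sqrt K)) ^ 2) by (simpl; nra).
    simpl. nra. }
  set (S := N * (4 * gamma / K) ^ 2 * C).
  assert (HS0 : 0 <= S)
    by (unfold S; apply Rmult_le_pos; [apply Rmult_le_pos; [|apply pow2_ge_0] |]; lra).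
  assert (HSK : S * K ^ 2 <= 80 * P).
  { unfold S, P. replace (N * (4 * gamma / K) ^ 2 * C * K ^ 2) with (16 * (N * gamma ^ 2) * C)
      by (field; lra).
    assert (0 <= N * gamma ^ 2) by (apply Rmult_le_pos; [auto | apply pow2_ge_0]). nra. }
  assert (HS2 : S ^ 2 * K < 6400 * (1 / 300) ^ 2).
  { apply Rmult_lt_reg_r with (K ^ 3); [apply pow_lt; auto|].
    assert ((S * K ^ 2) ^ 2 <= (80 * P) ^ 2)
      by (apply pow_incr; split; [apply Rmult_le_pos; [auto | apply pow2_ge_0] | auto]).
    nra. }
  assert (0 <= S ^ 2) by apply pow2_ge_0.
  nra.
Qed.

Theorem theorem5p2 :
  exists c : R, c > 0 /\
    forall (k n : nat) (gamma eps : R) (D : list (list bool) -> R),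
      (2 <= k)%nat ->
      0 < gamma <= 1 / 4 ->
      0 < eps <= 1 ->
      valid_rule D ->
      is_uniformity_tester eps k n gamma D ->
      INR n >= c * (INR k * sqrt (INR k)) / (gamma ^ 2 * eps ^ 2).
Proof.
  exists (1 / 300). split; [lra|].
  intros k n gamma eps D Hk Hg He HD Ht.
  apply Rnot_lt_ge. intros Hn.
  destruct (half_pairs k Hk) as (Hm & Hm1 & Hmk & _).
  destruct (hard_scale k gamma Hk Hg) as [Heta Hfar].
  set (m := Nat.div2 k) in *. set (eta := 4 * gamma / INR k) in *.
  pose proof (rappor_chi_const_bounds eps He) as HC.
  set (S := INR n * eta ^ 2 * rappor_chi_const eps).
  assert (HmS : INR m * S ^ 2 <= 1 / 20).
  { apply (few_samples_small_overlap (INR k) (INR m) (INR n) gamma eps);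
      try apply pos_INR; auto; lra. }
  assert (HS : 0 <= S < 1).
  { assert (0 <= S) by (apply Rmult_le_pos; [apply Rmult_le_pos; [apply pos_INR | apply pow2_ge_0] | lra]).
    nra. }
  pose proof (tester_mixture_chi2_ge eps k n m eta gamma D ltac:(lra) ltac:(lia) Hm Heta Hfar HD Ht).
  pose proof (mixture_chi2_le eps k n m eta ltac:(lra) ltac:(lia) Hm Heta S HS ltac:(lra) (Rle_refl S)).
  assert (/ (1 - INR m * S ^ 2) <= 20 / 19)
    by (replace (20 / 19) with (/ (19 / 20)) by field; apply Rinv_le_contravar; nra).
  lra.
Qed.
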